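(* Let $V\subset\mathbb N$ be finite, $l\in\mathbb N$, and let $G_{\mathbf i}\in\mathcal C_{V,2l}$ have a balanced leaf $v_j$. Let $\widetilde G$ be the version of $G_{\mathbf i}$ with $v_j$ removed. Then $B(G_{\mathbf i})\setminus\{v_j\}=B(\widetilde G)$.
   Context: For a finite $V\subset\mathbb N$ and $N\ge1$, a route through $V$ of length $N$ is a sequence $\mathbf i=(i_1,\dots,i_N)\in V^N$ whose set of entries equals $V$; its circuit multigraph $G_{\mathbf i}$ has vertex set $V$ and edges $1,\dots,N$, edge $k<N$ from $i_k$ to $i_{k+1}$, edge $N$ from $i_N$ to $i_1$; $\mathcal C_{V,N}$ is the set of these. The black vertices are $B(G_{\mathbf i})=\{i_t:t\text{ odd}\}$. Balanced leaf (only when $N>2$): a vertex $v$ occurring exactly once in $\mathbf i$, say $i_t=v$, whose cyclic neighbours $i_{t-1},i_{t+1}$ (indices mod $N$) are equal. The version with $v=i_t$ removed is $G_{\mathbf i'}$, where $\mathbf i'$ is obtained from $\mathbf i$ by deleting the entries at positions $t,t+1$ if $t<N$, and at positions $N-1,N$ if $t=N$; it is a route through $V\setminus\{v\}$ of length $N-2$. *)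

From mathcomp Require Import all_boot.
From mathcomp Require Import finmap.
Set Implicit Arguments. Unset Strict Implicit. Unset Printing Implicit Defensive.
Local Open Scope fset_scope.

(* A route is a sequence i = (i_1,...,i_N) of naturals; positions are 1-based. *)
Definition ent (i : seq nat) (t : nat) : nat := nth 0 i t.-1.

Definition is_route (V : {fset nat}) (N : nat) (i : seq nat) : Prop :=
  size i = N /\ (forall x : nat, (x \in i) = (x \in V)).

Definition cprev (N t : nat) : nat := if t == 1 then N else t.-1.
Definition cnext (N t : nat) : nat := if t == N then 1 else t.+1.

Definition balanced_leaf (i : seq nat) (t : nat) : Prop :=
  let N := size i in
  [/\ 2 < N, 1 <= t <= N, count_mem (ent i t) i = 1
    & ent i (cprev N t) = ent i (cnext N t)].

(* The route i' of the version with v = i_t removed: delete positions t, t+1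
   if t < N, and positions N-1, N if t = N. *)
Definition remove_leaf (i : seq nat) (t : nat) : seq nat :=
  let N := size i in
  if t < N then take t.-1 i ++ drop t.+1 i else take (N - 2) i.

Definition black (i : seq nat) : seq nat :=
  [seq ent i t | t <- iota 1 (size i) & odd t].

From mathcomp Require Import all_boot.
From mathcomp Require Import finmap.
From mathcomp Require Import zify.

(* Deleting the leaf v = i_t together with one copy of its repeated neighbour
   removes two consecutive positions, so every surviving entry keeps the parity
   of its position: the black vertices of the shorter route are the entries at
   black positions other than the two deleted ones.  One deleted position holds v,
   which occurs nowhere else.  If the other one is black, it holds the repeated
   neighbour, which also sits at a surviving black position on the other side of
   v (two steps back, or at the start of the route when v is last). *)

Set Implicit Arguments.
Unset Strict Implicit.
Unset Printing Implicit Defensive.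

Lemma count_mem1_nth_eq (T : eqType) (x0 : T) (s : seq T) (p k : nat) :
  count_mem (nth x0 s p) s = 1 -> p < size s -> k < size s ->
  (nth x0 s k == nth x0 s p) = (k == p).
Proof.
move=> count1 ltp ltk; apply/eqP/eqP=> [eq_kp|->] //.
set v := nth x0 s p in count1 eq_kp *; pose at_v n := nth x0 s n == v.
have : size (filter at_v (iota 0 (size s))) = 1.
  by rewrite size_filter -count1 -{2}(mkseq_nth x0 s) /mkseq count_map.
case Ev: filter => [|y []] // _.
have at_y n : n < size s -> at_v n -> n = y.
  by move=> ltn vn; apply/eqP; rewrite -mem_seq1 -Ev mem_filter vn mem_iota.
by rewrite (at_y k ltk (introT eqP eq_kp)) (at_y p ltp (eqxx v)).
Qed.

Lemma blackP (s : seq nat) (x : nat) :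
  reflect (exists2 k, (k < size s) && ~~ odd k & nth 0 s k = x) (x \in black s).
Proof.
apply: (iffP mapP) => [[n]|[k /andP[ltk evk] <-]].
  rewrite mem_filter mem_iota => /and3P[odd_n pos_n lt_n] ->.
  by exists n.-1; [rewrite -oddS prednK //; lia | ].
by exists k.+1; rewrite // mem_filter mem_iota /= evk; lia.
Qed.

Definition delete2 (j : nat) (s : seq nat) : seq nat := take j s ++ drop j.+2 s.

Lemma size_delete2 j s : j.+1 < size s -> size (delete2 j s) = (size s).-2.
Proof. by move=> ltj; rewrite size_cat size_take size_drop; case: ltnP; lia. Qed.

Lemma nth_delete2 j s k : j <= size s ->
  nth 0 (delete2 j s) k = nth 0 s (if k < j then k else k.+2).
Proof.
move=> lej; rewrite nth_cat size_take_min (minn_idPl lej) nth_drop.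
by case: ltnP => [ltk|lek]; [rewrite nth_take | congr nth; lia].
Qed.

Lemma black_delete2P j s x : j.+1 < size s ->
  reflect (exists2 k, [&& k < size s, ~~ odd k & k \notin [:: j; j.+1]] & nth 0 s k = x)
          (x \in black (delete2 j s)).
Proof.
move=> ltj; apply: (iffP (blackP _ _)); rewrite (size_delete2 ltj).
  move=> [k /andP[ltk evk] <-]; rewrite nth_delete2; last lia.
  case: ltnP => [kj|jk]; [exists k | exists k.+2] => //; rewrite !inE /= ?negbK evk /=; lia.
move=> [k /and3P[ltk evk]]; rewrite !inE => nj <-.
case: (ltnP k j) => [kj|jk].
  by exists k; rewrite ?evk ?nth_delete2 ?kj //; lia.
exists (k - 2); first lia.
by rewrite nth_delete2; [case: ltnP => ?; [|congr nth] | ]; lia.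
Qed.

Lemma black_delete2_leaf (s : seq nat) (j p q : nat) :
  j.+1 < size s -> count_mem (nth 0 s p) s = 1 ->
  p \in [:: j; j.+1] -> q \in [:: j; j.+1] -> p != q ->
  (~~ odd q -> nth 0 s q \in black (delete2 j s)) ->
  black (delete2 j s) =i [predD1 black s & nth 0 s p].
Proof.
move=> ltj once jp jq pq twin x /=; have ltp : p < size s by move: jp; rewrite !inE; lia.
rewrite inE; apply/idP/andP.
  move=> /(black_delete2P _ ltj)[k /and3P[ltk evk nk] <-]; split.
    by rewrite (count_mem1_nth_eq once ltp ltk); apply: contraNneq nk => ->.
  by apply/blackP; exists k; rewrite ?ltk.
move=> [xv /blackP[k /andP[ltk evk] ekx]].
move: xv; rewrite -ekx (count_mem1_nth_eq once ltp ltk) => kp.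
have [jk|nk] := boolP (k \in [:: j; j.+1]); last first.
  by apply/(black_delete2P _ ltj); exists k; rewrite ?ltk ?evk.
have kq : k = q by move: jk jp jq kp pq; rewrite !inE; lia.
by rewrite kq in evk *; apply: twin.
Qed.

Section BalancedLeaf.

Variables (i : seq nat) (t : nat).
Hypothesis leaf : balanced_leaf i t.

Lemma black_remove_inner_leaf : t < size i ->
  black (remove_leaf i t) =i [predD1 black i & ent i t].
Proof.
move: leaf => [_ /andP[t_gt0 _] once bal] lt_t.
have -> : remove_leaf i t = delete2 t.-1 i by rewrite /remove_leaf lt_t /delete2 prednK.
apply: (black_delete2_leaf (q := t)) => //; rewrite ?inE ?eqxx //; try lia.
move=> ev_t; have t1 : (t == 1) = false by lia.
have tN : (t == size i) = false by lia.
move: bal; rewrite /cprev /cnext t1 tN /ent /= => bal.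
have ltj : t.-1.+1 < size i by rewrite prednK.
by apply/(black_delete2P _ ltj); exists t.-2; rewrite ?bal ?inE; lia.
Qed.

Lemma black_remove_last_leaf : t = size i ->
  black (remove_leaf i t) =i [predD1 black i & ent i t].
Proof.
move=> t_last; move: leaf; rewrite t_last; set N := size i => -[gt2 _ once bal].
have -> : remove_leaf i N = delete2 N.-2 i.
  by rewrite /remove_leaf ltnn /delete2 subn2 drop_oversize ?cats0 //; lia.
have ltj : N.-2.+1 < N by lia.
apply: (black_delete2_leaf (p := N.-1) (q := N.-2)); rewrite ?inE ?eqxx //; try lia.
move: bal; rewrite /cprev /cnext eqxx ifF /ent /=; last lia.
by move=> bal ev_N; apply/(black_delete2P _ ltj); exists 0; rewrite ?bal ?inE; lia.
Qed.

End BalancedLeaf.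

Theorem lemma4p3 (V : {fset nat}) (l : nat) (i : seq nat) (t : nat) :
  is_route V (2 * l) i -> balanced_leaf i t ->
  black (remove_leaf i t) =i [predD1 black i & ent i t].
Proof.
move=> _ leaf; have [_ /andP[_ le_t] _ _] := leaf.
have [lt_t | ge_t] := ltnP t (size i).
  exact: black_remove_inner_leaf leaf lt_t.
by apply: (black_remove_last_leaf leaf); apply/eqP; rewrite eqn_leq le_t.
Qed.
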